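(* Let $G=(V,E)$ be a simple graph and let $a,b$ be positive integers. Let $V_D'\subseteq V$ be such that every $v\in V_D'$ satisfies $$|E(N^a(v))|\ge|E(N^{100ab}(v))|/(2b).$$ Let $W_0=\{u\in V:\operatorname{dist}(u,V_D')\le a\}$. Then the vertex set $S$ of every connected component of $G[W_0]$ satisfies the invariant $\mathcal H$.
   Context: $\operatorname{dist}$ is the shortest-path distance in $G$; $\operatorname{dist}(u,X)=\min_{x\in X}\operatorname{dist}(u,x)$; $N^r(v)=\{u:\operatorname{dist}(u,v)\le r\}$; $E(X)$ is the set of edges with both endpoints in $X$. For a vertex set $X$ (with $V_D'$ and $a$ fixed): - $N_X$ is the maximum size of a subset $X^*\subseteq X\cap V_D'$ such that $\operatorname{dist}(u,v)>2a$ for every pair of distinct $u,v\in X^*$; - $D_X$ is the diameter of the induced subgraph $G[X]$ (equal to $\infty$ if $G[X]$ is disconnected). A vertex set $S$ satisfies invariant $\mathcal H$ if all three of the following hold: 1. for each $u\in V_D'$, either $N^a(u)\subseteq S$ or $N^a(u)\cap S=\emptyset$; 2. $D_S\le 10a\cdot N_S-(4a+1)$; 3. $N_S\le 2b$. *)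

(* A finite simple graph: T : finType, e : rel T symmetric, irreflexive. *)
From mathcomp Require Import all_boot all_order all_algebra.
Set Implicit Arguments. Unset Strict Implicit. Unset Printing Implicit Defensive.

Section Graph.
Variables (T : finType) (e : rel T).

(* N^r(v) = {u : dist_G(u,v) <= r}, by BFS layers in G. *)
Definition ball (r : nat) (v : T) : {set T} :=
  iter r (fun X => X :|: [set y | [exists x in X, e x y]]) [set v].

(* BFS ball inside the induced subgraph G[S]; iball S r v = {u : dist_{G[S]}(u,v) <= r}
   (for v in S). *)
Definition iball (S : {set T}) (r : nat) (v : T) : {set T} :=
  iter r (fun X => X :|: [set y in S | [exists x in X, e x y]]) [set v].

(* distance in G[S] (meaningful when u, v are connected in G[S]) *)
Definition idist (S : {set T}) (u v : T) : nat :=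
  \big[minn/#|T|]_(n < #|T|.+1 | u \in iball S n v) n.

Definition iconnected (S : {set T}) : bool :=
  [forall u in S, forall v in S, u \in iball S #|T| v].

(* D_X : diameter of G[X]; None stands for infinity (G[X] disconnected). *)
Definition diam (S : {set T}) : option nat :=
  if iconnected S then Some (\max_(u in S) \max_(v in S) idist S u v) else None.

(* E(X): unordered edges with both endpoints in X, as 2-element sets. *)
Definition Eset (X : {set T}) : {set {set T}} :=
  [set A : {set T} | [exists x in X, exists y in X, (A == [set x; y]) && e x y]].

Definition far (a : nat) (Y : {set T}) : bool :=
  [forall u in Y, forall v in Y, (u != v) ==> (u \notin ball (2 * a) v)].

Definition NX (VD : {set T}) (a : nat) (X : {set T}) : nat :=
  \max_(Y : {set T} | (Y \subset X :&: VD) && far a Y) #|Y|.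

Definition W0 (VD : {set T}) (a : nat) : {set T} :=
  [set u | [exists x in VD, u \in ball a x]].

Definition irel (W : {set T}) : rel T := fun x y => [&& e x y, x \in W & y \in W].

Definition is_component (W S : {set T}) : Prop :=
  exists2 x, x \in W & S = [set y | connect (irel W) x y].

Definition invH (VD : {set T}) (a b : nat) (S : {set T}) : Prop :=
  [/\ (forall u, u \in VD -> (ball a u \subset S) \/ [disjoint ball a u & S]),
      (match diam S with
       | Some d => (d%:Z <= (10 * a * NX VD a S)%:Z - (4 * a + 1)%:Z)%R
       | None => False
       end)
    & NX VD a S <= 2 * b].

End Graph.

From mathcomp Require Import all_boot all_order all_algebra.
From mathcomp Require Import zify.

(* Write N = N_S and let X be a maximum far subset of S ∩ V_D' (pairwise
   distances > 2a), so |X| = N.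
   - Condition 1: for u in V_D', N^a(u) is contained in W_0 and is connected in
     G[W_0], so it lies inside one component.
   - Every vertex of S is within a (in G[S]) of a vertex of V_D' ∩ S, which by
     maximality of X is within 2a of X; hence the G[S]-balls of radius 3a around
     X cover S.  In a connected G[S], such a covering forces the ball of radius
     k(6a+1) around any centre to contain min(k+1, N) centres.
   - Condition 2: taking k = N-1 bounds every distance in G[S] by
     6a + (N-1)(6a+1) <= 10aN - (4a+1) when N >= 2; the case N = 1 is direct.
   - Condition 3: if N > 2b, take the centre x with the fewest edges in its
     a-ball; 2b+1 centres within distance 2b(6a+1) of x have disjoint a-balls
     inside N^(100ab)(x), which contradicts the density hypothesis on x. *)

Set Implicit Arguments. Unset Strict Implicit. Unset Printing Implicit Defensive.

Lemma bigminn_le (I : eqType) (r : seq I) (P : pred I) (F : I -> nat) d i :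
  i \in r -> P i -> \big[minn/d]_(j <- r | P j) F j <= F i.
Proof.
elim: r => // j r IH; rewrite inE big_cons => /predU1P[<- -> | ir Pi]; first exact: geq_minl.
case: ifP => _; last exact: IH.
exact: leq_trans (geq_minr _ _) (IH ir Pi).
Qed.

Lemma minnS_le k n r : minn k n <= r -> minn k.+1 n <= r.+1.
Proof. lia. Qed.

Section BFS.
Variables (T : finType) (e : rel T).
Hypothesis e_sym : symmetric e.
Implicit Types (W : {set T}) (u v x y z : T).

Lemma iballS W r v :
  iball e W r.+1 v = iball e W r v :|: [set y in W | [exists x in iball e W r v, e x y]].
Proof. by rewrite /iball iterS. Qed.

Lemma iball_center W r v : v \in iball e W r v.
Proof. by elim: r => [|r IH]; rewrite ?set11 // iballS inE IH. Qed.

Lemma iball_subr W r s v : r <= s -> iball e W r v \subset iball e W s v.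
Proof.
elim: s => [|s IH]; first by rewrite leqn0 => /eqP ->.
rewrite leq_eqVlt => /orP[/eqP -> // | /IH sub].
by apply: subset_trans sub _; rewrite iballS subsetUl.
Qed.

Lemma iball_mono W r s v u : r <= s -> u \in iball e W r v -> u \in iball e W s v.
Proof. by move/(iball_subr W v)/subsetP; apply. Qed.

Lemma iball_step W r v u z :
  u \in iball e W r v -> z \in W -> e u z -> z \in iball e W r.+1 v.
Proof.
move=> uin zW euz; rewrite iballS !inE zW; apply/orP; right.
by apply/existsP; exists u; rewrite uin.
Qed.

Lemma iballSP W r v y :
  y \in iball e W r.+1 v ->
  y \in iball e W r v \/ exists2 x, x \in iball e W r v & y \in W /\ e x y.
Proof.
rewrite iballS !inE => /orP[H | /andP[yW /existsP[x /andP[xin exy]]]]; first by left.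
by right; exists x.
Qed.

Lemma iball_subW W W' r v : W \subset W' -> iball e W r v \subset iball e W' r v.
Proof.
move=> sWW'; elim: r => [|r IH] //; apply/subsetP => y /iballSP[yin | [x xin [yW exy]]].
  exact: iball_mono (leqnSn r) (subsetP IH _ yin).
exact: iball_step (subsetP IH _ xin) (subsetP sWW' _ yW) exy.
Qed.

Lemma iball_trans W r s v u z :
  u \in iball e W r v -> z \in iball e W s u -> z \in iball e W (r + s) v.
Proof.
move=> uin; elim: s z => [|s IH] z; first by rewrite addn0 inE => /eqP ->.
rewrite addnS => /iballSP[zin | [x xin [zW exz]]].
  exact: iball_mono (leqnSn _) (IH _ zin).
exact: iball_step (IH _ xin) zW exz.
Qed.

Lemma iball_split W r s v u :
  u \in iball e W (r + s) v -> exists2 m, m \in iball e W r v & u \in iball e W s m.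
Proof.
elim: s u => [|s IH] u; first by rewrite addn0 => uin; exists u; rewrite ?iball_center.
rewrite addnS => /iballSP[uin | [x xin [uW exu]]].
  by have [m m1 m2] := IH _ uin; exists m => //; apply: iball_mono (leqnSn s) m2.
by have [m m1 m2] := IH _ xin; exists m => //; apply: iball_step m2 uW exu.
Qed.

Lemma iball_sub W r v : iball e W r v \subset v |: W.
Proof.
elim: r => [|r IH]; first by rewrite sub1set setU11.
apply/subsetP => y /iballSP[yin | [x _ [yW _]]]; first exact: subsetP IH _ yin.
by rewrite setU1r.
Qed.

Lemma iball_sym W r v u : u \in iball e W r v -> v \in W -> v \in iball e W r u.
Proof.
move=> + vW; elim: r u => [|r IH] u; first by rewrite !inE eq_sym.
move=> /iballSP[uin | [x xin [uW exu]]]; first exact: iball_mono (leqnSn r) (IH _ uin).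
have xW : x \in W by case/setU1P: (subsetP (iball_sub W r v) _ xin) => [-> |].
have x1 : x \in iball e W 1 u by apply: iball_step (iball_center W 0 u) xW _; rewrite e_sym.
by rewrite -add1n; apply: iball_trans x1 (IH _ xin).
Qed.

Lemma iball_exit W (U : {set T}) n x y :
  x \in U -> y \in iball e W n x -> y \notin U ->
  exists p q, [/\ p \in U, q \notin U, q \in W & e p q].
Proof.
move=> xU; elim: n y => [|n IH] y; first by rewrite inE => /eqP ->; rewrite xU.
case/iballSP => [yin | [z zin [yW ezy]]]; first exact: IH.
by case zU: (z \in U) => yU; [exists z, y | apply: IH zin _; rewrite zU].
Qed.

Lemma iball_neighbour W n v u : u \in iball e W n v -> u != v -> exists z, e v z.
Proof.
move=> uin uv; have [|p [q [/set1P -> _ _ evq]]] := iball_exit (set11 v) uin.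
  by rewrite inE.
by exists q.
Qed.

Lemma idist_le W u v n : u \in iball e W n v -> idist e W u v <= n.
Proof.
rewrite /idist => uin; case: (leqP n #|T|) => [le_nT | lt_Tn].
  have i0 : n < #|T|.+1 by rewrite ltnS.
  exact: (@bigminn_le _ _ (fun i : 'I_#|T|.+1 => u \in iball e W i v) val _ (Ordinal i0)
    (mem_index_enum _) uin).
apply: leq_trans (ltnW lt_Tn); elim/big_ind: _ => // [x y le_xT _ | i _].
  exact: leq_trans (geq_minl x y) le_xT.
by rewrite -ltnS.
Qed.

Lemma diam_le S d : iconnected e S ->
  (forall u v, u \in S -> v \in S -> u \in iball e S d v) -> exists2 D, diam e S = Some D & D <= d.
Proof.
rewrite /diam => -> dist_le; exists (\max_(u in S) \max_(v in S) idist e S u v) => //.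
apply/bigmax_leqP => u uS; apply/bigmax_leqP => v vS; exact: idist_le (dist_le u v uS vS).
Qed.

Lemma ball_iball r v : ball e r v = iball e setT r v.
Proof. by apply: eq_iter => X; apply/setP => y; rewrite !inE. Qed.

Lemma iball_ball W r v : iball e W r v \subset ball e r v.
Proof. by rewrite ball_iball; apply: iball_subW; apply: subsetT. Qed.

Lemma ball_iball_in W r v : ball e r v \subset W -> ball e r v \subset iball e W r v.
Proof.
rewrite ball_iball; elim: r => [|r IH] // sub.
have sub' : iball e setT r v \subset W by apply: subset_trans sub; apply: iball_subr.
apply/subsetP => y yin; have yW := subsetP sub _ yin.
case/iballSP: yin => [yin | [x xin [_ exy]]].
  exact: iball_mono (leqnSn r) (subsetP (IH sub') _ yin).
exact: iball_step (subsetP (IH sub') _ xin) yW exy.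
Qed.

Lemma ball_center r v : v \in ball e r v.
Proof. by rewrite ball_iball iball_center. Qed.

Lemma ball_sym r v u : u \in ball e r v -> v \in ball e r u.
Proof. by rewrite !ball_iball => uin; apply: iball_sym uin _; rewrite inE. Qed.

Lemma ball_trans r s v u z : u \in ball e r v -> z \in ball e s u -> z \in ball e (r + s) v.
Proof. rewrite !ball_iball; exact: iball_trans. Qed.

Lemma ball_mono r s v u : r <= s -> u \in ball e r v -> u \in ball e s v.
Proof. rewrite !ball_iball; exact: iball_mono. Qed.

End BFS.

Section Component.
Variables (T : finType) (e : rel T).
Hypothesis e_sym : symmetric e.
Variables (W : {set T}) (x0 : T).
Hypothesis x0W : x0 \in W.
Local Notation S := [set y | connect (irel e W) x0 y].
Implicit Types (u v x y z : T).

Lemma irel_sym : symmetric (irel e W).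
Proof.
by move=> x y; rewrite /irel e_sym; case: (x \in W); case: (y \in W); rewrite ?andbF ?andbT.
Qed.

Lemma component_sub : S \subset W.
Proof.
apply/subsetP => y; rewrite inE => /connectP[p]; elim: p x0 x0W => [|z p IH] u uW /=.
  by move=> _ ->.
by case/andP => /and3P[_ _ zW] /IH; apply.
Qed.

Lemma component_closed y z : y \in S -> z \in W -> e y z -> z \in S.
Proof.
move=> yS zW eyz; have yW := subsetP component_sub _ yS.
rewrite in_set in yS; rewrite in_set; apply: connect_trans yS (connect1 _).
by rewrite /irel eyz zW yW.
Qed.

Lemma iball_component_sub r v : v \in S -> iball e W r v \subset S.
Proof.
move=> vS; elim: r => [|r IH]; first by rewrite sub1set.
apply/subsetP => y /iballSP[yin | [x xin [yW exy]]]; first exact: subsetP IH _ yin.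
exact: component_closed (subsetP IH _ xin) yW exy.
Qed.

Lemma iball_component r v : v \in S -> iball e W r v = iball e S r v.
Proof.
move=> vS; apply/eqP; rewrite eqEsubset (iball_subW _ _ _ component_sub) andbT.
elim: r => [|r IH] //; apply/subsetP => y /iballSP[yin | [x xin [yW exy]]].
  exact: iball_mono (leqnSn r) (subsetP IH _ yin).
apply: (iball_step (subsetP IH _ xin) _ exy).
exact: subsetP (iball_component_sub r.+1 vS) _ (iball_step xin yW exy).
Qed.

Lemma path_iball v s : path (irel e W) v s -> v \in W -> last v s \in iball e W (size s) v.
Proof.
elim: s v => [|y s IH] v /=; first by rewrite (iball_center e W 0).
case/andP => /and3P[evy _ yW] ps vW.
have y1 : y \in iball e W 1 v by apply: iball_step (iball_center e W 0 v) yW evy.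
exact: iball_trans y1 (IH _ ps yW).
Qed.

(* The component is connected in G[S]: shortest walks have length at most |T|. *)
Lemma component_iconnected : iconnected e S.
Proof.
apply/forallP => u; apply/implyP => uS; apply/forallP => v; apply/implyP => vS.
have /connectP[p pv ->] : connect (irel e W) v u.
  rewrite !in_set in uS vS; apply: connect_trans _ uS; by rewrite (sym_connect_sym irel_sym).
have [p' pv' uniq_p' _] := shortenP pv.
have size_p' : size p' <= #|T|.
  by have := max_card (mem (v :: p')); rewrite (card_uniqP uniq_p'); apply: ltnW.
rewrite -iball_component //.
exact: iball_mono size_p' (path_iball pv' (subsetP component_sub _ vS)).
Qed.

End Component.

(* In a connected G[S] covered by G[S]-balls of radius m around a set X of
   centres, the centres are linked by steps of length 2m+1: the ball of radius
   k(2m+1) around a centre contains at least min(k+1, |X|) centres. *)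
Section Covering.
Variables (T : finType) (e : rel T).
Hypothesis e_sym : symmetric e.
Variables (S X : {set T}) (m : nat).
Hypothesis S_conn : iconnected e S.
Hypothesis XS : X \subset S.
Hypothesis X_cover : forall p, p \in S -> exists2 c, c \in X & p \in iball e S m c.

Lemma iconnected_iball u v : u \in S -> v \in S -> u \in iball e S #|T| v.
Proof.
by move=> uS vS; have /forallP/(_ u)/implyP/(_ uS)/forallP/(_ v)/implyP/(_ vS) := S_conn.
Qed.

Lemma cover_step (Y : {set T}) x : Y \subset X -> x \in Y -> ~~ (X \subset Y) ->
  exists2 z, z \in X :\: Y & exists2 c, c \in Y & z \in iball e S (2 * m).+1 c.
Proof.
move=> YX xY /subsetPn[y yX yY].
have le_m : m <= (2 * m).+1 by rewrite mul2n -addnn -addnS leq_addr.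
pose U := [set p in S | [exists c in Y, p \in iball e S m c]].
case: (boolP (y \in U)) => [| yU].
  rewrite inE => /andP[_ /existsP[c /andP[cY yc]]].
  by exists y; [rewrite inE yY | exists c => //; apply: iball_mono le_m yc].
have xS := subsetP XS _ (subsetP YX _ xY).
have xU : x \in U by rewrite inE xS; apply/existsP; exists x; rewrite xY iball_center.
have yx := iconnected_iball (subsetP XS _ yX) xS.
have [p [q [pU qU qS epq]]] := iball_exit xU yx yU.
move: pU; rewrite inE => /andP[_ /existsP[c /andP[cY pc]]].
have [c' c'X qc'] := X_cover qS.
have c'Y : c' \notin Y.
  by apply: contra qU => c'Y; rewrite inE qS; apply/existsP; exists c'; rewrite c'Y.
exists c'; first by rewrite inE c'Y.
exists c => //; rewrite mul2n -addnn -addSn.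
exact: iball_trans (iball_step pc qS epq) (iball_sym e_sym qc' (subsetP XS _ c'X)).
Qed.

(* Induction on k, adding one new centre per step of length 2m+1. *)
Lemma cover_reach x k : x \in X ->
  minn k.+1 #|X| <= #|[set y in X | y \in iball e S (k * (2 * m).+1) x]|.
Proof.
move=> xX; elim: k => [|k IH].
  rewrite mul0n; apply: leq_trans (geq_minl _ _) _.
  by apply/card_gt0P; exists x; rewrite inE xX iball_center.
set R := [set y in X | _] in IH *; set R' := [set y in X | _].
have RR' : R \subset R'.
  apply/subsetP => y /setIdP[yX yx]; apply/setIdP; split => //.
  by apply: (iball_mono _ yx); rewrite leq_mul2r leqnSn orbT.
case: (boolP (X \subset R)) => [XR | XnR].
  exact: leq_trans (geq_minr _ _) (subset_leq_card (subset_trans XR RR')).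
have RX : R \subset X by apply/subsetP => y; rewrite inE => /andP[].
have xR : x \in R by rewrite inE xX iball_center.
have [z /setDP[zX zR] [c cR zc]] := cover_step RX xR XnR.
have zR' : z \in R'.
  apply/setIdP; split => //; case/setIdP: cR => _ cx.
  by rewrite mulSn addnC; apply: iball_trans cx zc.
have zRR' : z |: R \subset R' by rewrite subUset sub1set zR' RR'.
apply: leq_trans (minnS_le IH) _.
by have := subset_leq_card zRR'; rewrite cardsU1 zR.
Qed.

End Covering.

Lemma card_bigcup_disjoint (I U : finType) (R : {set I}) (F : I -> {set U}) :
  {in R &, forall i j, i != j -> [disjoint F i & F j]} ->
  #|\bigcup_(i in R) F i| = \sum_(i in R) #|F i|.
Proof.
move: {2}#|R| (erefl #|R|) => n; elim: n R => [|n IH] R cardR disR.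
  by move/eqP: cardR; rewrite cards_eq0 => /eqP ->; rewrite !big_set0 cards0.
have [i iR] : exists i, i \in R by apply/card_gt0P; rewrite cardR.
rewrite (big_setD1 i iR) (big_setD1 i iR) /=.
have cardRi : #|R :\ i| = n by move: cardR; rewrite (cardsD1 i) iR => [[]].
rewrite -IH //; last by move=> j k /setD1P[_ jR] /setD1P[_ kR]; apply: disR.
apply/eqP; rewrite (leq_card_setU _ _).2; apply: bigcup_disjoint => j /setD1P[ji jR].
by apply: disR; rewrite // eq_sym.
Qed.

Section Edges.
Variables (T : finType) (e : rel T).

Lemma Eset_mono (A B : {set T}) : A \subset B -> Eset e A \subset Eset e B.
Proof.
move=> sAB; apply/subsetP => Z; rewrite !inE => /existsP[x /andP[xA /existsP[y /andP[yA Zxy]]]].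
apply/existsP; exists x; rewrite (subsetP sAB _ xA).
by apply/existsP; exists y; rewrite (subsetP sAB _ yA).
Qed.

(* An edge determines its endpoints, so disjoint vertex sets span disjoint edge sets. *)
Lemma Eset_disjoint (A B : {set T}) : [disjoint A & B] -> [disjoint Eset e A & Eset e B].
Proof.
move=> dAB; apply/pred0P => Z /=; apply/negbTE/andP => -[].
rewrite !inE => /existsP[x /andP[xA /existsP[y /andP[yA /andP[/eqP -> _]]]]].
move=> /existsP[x' /andP[x'B /existsP[y' /andP[y'B /andP[/eqP Exy _]]]]].
have : x \in [set x'; y'] by rewrite -Exy set21.
by case/set2P => Ex; move: xA; rewrite Ex ?(disjointFl dAB x'B) ?(disjointFl dAB y'B).
Qed.

Lemma Eset_ball_gt0 a v z : 0 < a -> e v z -> 0 < #|Eset e (ball e a v)|.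
Proof.
move=> a_pos evz; apply/card_gt0P; exists [set v; z]; rewrite inE.
apply/existsP; exists v; rewrite ball_center; apply/existsP; exists z; rewrite eqxx evz !andbT.
rewrite ball_iball; apply: iball_mono a_pos _.
exact: iball_step (iball_center e setT 0 v) (in_setT z) evz.
Qed.

End Edges.

Section Far.
Variables (T : finType) (e : rel T).
Hypothesis e_sym : symmetric e.
Variable a : nat.
Implicit Types (Y : {set T}) (u v w : T).

Lemma farP Y u v : far e a Y -> u \in Y -> v \in Y -> u != v -> u \notin ball e (2 * a) v.
Proof.
move=> /forallP/(_ u)/implyP farY uY vY uv.
by move/forallP/(_ v)/implyP/(_ vY)/implyP: (farY uY); apply.
Qed.

Lemma far_sub Y Y' : Y \subset Y' -> far e a Y' -> far e a Y.
Proof.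
move=> sYY' farY'; apply/forallP => u; apply/implyP => uY; apply/forallP => v.
by apply/implyP => vY; apply/implyP; apply: farP farY' _ _; apply: (subsetP sYY').
Qed.

Lemma far_set1 w : far e a [set w].
Proof.
apply/forallP => u; apply/implyP => /set1P ->; apply/forallP => v; apply/implyP => /set1P ->.
by rewrite eqxx.
Qed.

Lemma far_setU1 Y w : far e a Y -> (forall c, c \in Y -> c != w -> c \notin ball e (2 * a) w) ->
  far e a (w |: Y).
Proof.
move=> farY wfar; apply/forallP => u; apply/implyP => /setU1P uY.
apply/forallP => v; apply/implyP => /setU1P vY; apply/implyP => uv.
case: uY vY uv => [-> | uY] [-> | vY] uv.
- by rewrite eqxx in uv.
- have vw : v != w by rewrite eq_sym.
  by apply/negP => /(ball_sym e_sym); apply/negP: (wfar v vY vw).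
- exact: wfar.
- exact: farP farY uY vY uv.
Qed.

Lemma far_disjoint_balls Y u v : far e a Y -> u \in Y -> v \in Y -> u != v ->
  [disjoint ball e a u & ball e a v].
Proof.
move=> farY uY vY uv; apply/pred0P => z /=; apply/negbTE/andP => -[zu zv].
have := farP farY uY vY uv; rewrite mul2n -addnn.
by rewrite (ball_trans zv (ball_sym e_sym zu)).
Qed.

Lemma far_packing Y c r : far e a Y -> {subset Y <= ball e r c} ->
  \sum_(y in Y) #|Eset e (ball e a y)| <= #|Eset e (ball e (r + a) c)|.
Proof.
move=> farY Yc; rewrite -card_bigcup_disjoint; last first.
  by move=> u v uY vY uv; apply/Eset_disjoint/(far_disjoint_balls farY).
apply/subset_leq_card/bigcupsP => y yY; apply: Eset_mono; apply/subsetP => z zy.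
exact: ball_trans (Yc _ yY) zy.
Qed.

End Far.

Lemma arith_single a : 0 < a -> a + (2 * a + a) <= 10 * a * 1 - (4 * a + 1).
Proof. lia. Qed.

Lemma arith_reach a N : 0 < a -> 1 < N ->
  3 * a + (N.-1 * (2 * (3 * a)).+1 + 3 * a) <= 10 * a * N - (4 * a + 1).
Proof.
move=> a_pos N_gt1; have -> : N = N.-1.+1 by rewrite prednK // ltnW.
by rewrite mulnS; nia.
Qed.

Lemma arith_packing a b : 0 < a -> 0 < b -> 2 * b * (2 * (3 * a)).+1 + a <= 100 * a * b.
Proof. nia. Qed.

Lemma dominated_zero n k m : k < n -> n * m <= k * m -> m = 0.
Proof. by case: m => // m lt_kn; rewrite leq_pmul2r // leqNgt lt_kn. Qed.

Lemma arith_int a N D : 0 < a -> 0 < N -> D <= 10 * a * N - (4 * a + 1) ->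
  (D%:Z <= (10 * a * N)%:Z - (4 * a + 1)%:Z)%R.
Proof. by move=> a_pos N_pos D_le; rewrite subzn ?lez_nat //; nia. Qed.

Section Setting.
Variables (T : finType) (e : rel T).
Hypothesis e_sym : symmetric e.
Variables (VD : {set T}) (a : nat).
Local Notation W := (W0 e VD a).

Lemma ball_sub_W0 u : u \in VD -> ball e a u \subset W.
Proof.
by move=> uV; apply/subsetP => y yu; rewrite inE; apply/existsP; exists u; rewrite uV yu.
Qed.

Lemma VD_sub_W0 u : u \in VD -> u \in W.
Proof. by move=> uV; apply: subsetP (ball_sub_W0 uV) _ (ball_center e a u). Qed.

Lemma ball_iball_W0 u : u \in VD -> ball e a u \subset iball e W a u.
Proof. by move/ball_sub_W0/ball_iball_in. Qed.

Variable x0 : T.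
Hypothesis x0W : x0 \in W.
Local Notation S := [set y | connect (irel e W) x0 y].

(* Condition 1 of invariant H: N^a(u) is connected in G[W], so it lies in one component. *)
Lemma ball_component u : u \in VD -> ball e a u \subset S \/ [disjoint ball e a u & S].
Proof.
move=> uV; case: (boolP (u \in S)) => uS; [left | right].
  exact: subset_trans (ball_iball_W0 uV) (iball_component_sub x0W a uS).
apply/pred0P => y /=; apply/negbTE/andP => -[yu yS].
have uy := iball_sym e_sym (subsetP (ball_iball_W0 uV) _ yu) (VD_sub_W0 uV).
by rewrite (subsetP (iball_component_sub x0W a yS) _ uy) in uS.
Qed.

Lemma component_VD_cover p : p \in S -> exists2 w, w \in S :&: VD & p \in iball e S a w.
Proof.
move=> pS; have := subsetP (component_sub e x0W) _ pS.
rewrite inE => /existsP[w /andP[wV pw]].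
have {}pw := subsetP (ball_iball_W0 wV) _ pw.
have wS := subsetP (iball_component_sub x0W a pS) _ (iball_sym e_sym pw (VD_sub_W0 wV)).
by exists w; [rewrite inE wS wV | rewrite -(iball_component x0W)].
Qed.

(* Two vertices of VD at distance at most 2a in G are at distance at most 2a in
   G[S]: each vertex of a shortest path between them is within distance a of an
   endpoint, hence lies in W. *)
Lemma component_VD_near w x : w \in VD -> x \in VD -> w \in S ->
  x \in ball e (2 * a) w -> x \in iball e S (2 * a) w.
Proof.
move=> wV xV wS; rewrite ball_iball mul2n -addnn => /iball_split[m mw xm].
have mW : m \in iball e W a w by apply: (subsetP (ball_iball_W0 wV)); rewrite ball_iball.
have mx : m \in iball e W a x.
  by apply: (subsetP (ball_iball_W0 xV)); rewrite ball_iball; apply: iball_sym xm _.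
rewrite -(iball_component x0W) //.
exact: iball_trans mW (iball_sym e_sym mx (VD_sub_W0 xV)).
Qed.

Section MaximalFarSet.
Variable X : {set T}.
Hypothesis X_sub : X \subset S :&: VD.
Hypothesis X_far : far e a X.
Hypothesis X_max : forall Y : {set T}, Y \subset S :&: VD -> far e a Y -> #|Y| <= #|X|.

Lemma X_sub_S : X \subset S.
Proof. by apply: subset_trans X_sub _; apply: subsetIl. Qed.

Lemma X_sub_VD : X \subset VD.
Proof. by apply: subset_trans X_sub _; apply: subsetIr. Qed.

Lemma maximal_far_center w : w \in S -> w \in VD -> exists2 c, c \in X & c \in ball e (2 * a) w.
Proof.
move=> wS wV.
case: (boolP [exists c in X, c \in ball e (2 * a) w]) => [/existsP[c /andP[cX cw]] | none].
  by exists c.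
have wX : w \notin X.
  by apply: contra none => wX; apply/existsP; exists w; rewrite wX ball_center.
have farwX : far e a (w |: X).
  apply: (far_setU1 e_sym X_far) => c cX _; apply: contra none => cw.
  by apply/existsP; exists c; rewrite cX.
have : #|w |: X| <= #|X| by apply: X_max farwX; rewrite subUset sub1set inE wS wV X_sub.
by rewrite cardsU1 wX /= add1n ltnn.
Qed.

Lemma X_cover p : p \in S -> exists2 c, c \in X & p \in iball e S (3 * a) c.
Proof.
move=> pS; have [w /setIP[wS wV] pw] := component_VD_cover pS.
have [c cX cw] := maximal_far_center wS wV.
have wc := component_VD_near wV (subsetP X_sub_VD _ cX) wS cw.
by exists c => //; rewrite (mulSn 2) addnC; apply: iball_trans (iball_sym e_sym wc wS) pw.
Qed.

Lemma X_card_gt0 : 0 < #|X|.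
Proof.
have x0S : x0 \in S by rewrite inE connect0.
by have [c cX _] := X_cover x0S; apply/card_gt0P; exists c.
Qed.

Lemma single_center_near w w' : #|X| = 1 -> w \in S :&: VD -> w' \in S :&: VD ->
  w \in ball e (2 * a) w'.
Proof.
move=> X1 wSV w'SV; apply: contraT => ww'.
have neq : w != w' by apply: contra ww' => /eqP ->; apply: ball_center.
have farww' : far e a (w |: [set w']).
  apply: (far_setU1 e_sym (far_set1 _ _ _)) => c /set1P -> _.
  by apply: contra ww' => /(ball_sym e_sym).
have : #|w |: [set w']| <= #|X| by apply: X_max farww'; rewrite subUset !sub1set wSV w'SV.
by rewrite cardsU1 cards1 inE neq X1.
Qed.

Lemma component_dist u v : 0 < a -> u \in S -> v \in S ->
  u \in iball e S (10 * a * #|X| - (4 * a + 1)) v.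
Proof.
move=> a_pos uS vS; case: (ltngtP #|X| 1) => [| X_gt1 | X1].
- by rewrite ltnS leqNgt X_card_gt0.
- have [cu cuX uc] := X_cover uS; have [cv cvX vc] := X_cover vS.
  have := cover_reach e_sym (component_iconnected e_sym x0W) X_sub_S X_cover #|X|.-1 cvX.
  rewrite prednK ?X_card_gt0 // minnn => cardR.
  have cuc : cu \in iball e S (#|X|.-1 * (2 * (3 * a)).+1) cv.
    set R := [set y in X | _] in cardR.
    have RX : R = X by apply/eqP; rewrite eqEcard cardR andbT; apply/subsetP => y /setIdP[].
    by have /setIdP[] : cu \in R by rewrite RX.
  apply: (iball_mono (arith_reach a_pos X_gt1)).
  exact: iball_trans (iball_sym e_sym vc (subsetP X_sub_S _ cvX)) (iball_trans cuc uc).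
- have [wu wuSV uw] := component_VD_cover uS; have [wv wvSV vw] := component_VD_cover vS.
  have wuw := component_VD_near (setIP wvSV).2 (setIP wuSV).2 (setIP wvSV).1
    (single_center_near X1 wuSV wvSV).
  rewrite X1; apply: (iball_mono (arith_single a_pos)).
  exact: iball_trans (iball_sym e_sym vw (setIP wvSV).1) (iball_trans wuw uw).
Qed.

(* Take x in X with the fewest edges in its a-ball.
   If |X| > 2b, at least 2b+1 centres lie within distance 2b(6a+1) of x; their
   a-balls are disjoint and lie in N^(100ab)(x), so
   (2b+1)|E(N^a(x))| <= |E(N^(100ab)(x))| <= 2b|E(N^a(x))|,
   forcing E(N^a(x)) to be empty although x has a neighbour. *)
Lemma X_card_le b : 0 < a -> 0 < b ->
  (forall v, v \in VD -> #|Eset e (ball e (100 * a * b) v)| <= 2 * b * #|Eset e (ball e a v)|) ->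
  #|X| <= 2 * b.
Proof.
move=> a_pos b_pos hVD; rewrite leqNgt; apply/negP => X_big.
pose f y := #|Eset e (ball e a y)|.
have [c0 c0X] : exists c0, c0 \in X by apply/card_gt0P; apply: X_card_gt0.
have [x xX xmin] := arg_minnP f c0X.
set R := [set y in X | y \in iball e S (2 * b * (2 * (3 * a)).+1) x].
have R_X : R \subset X by apply/subsetP => y /setIdP[].
have cardR : (2 * b).+1 <= #|R|.
  have := cover_reach e_sym (component_iconnected e_sym x0W) X_sub_S X_cover (2 * b) xX.
  by rewrite (minn_idPl X_big).
have sum_le : \sum_(y in R) f y <= 2 * b * f x.
  apply: leq_trans (hVD x (subsetP X_sub_VD _ xX)).
  have R_near : {subset R <= ball e (2 * b * (2 * (3 * a)).+1) x}.
    by move=> y /setIdP[_ yx]; apply: (subsetP (iball_ball e S _ x)).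
  apply: leq_trans (far_packing e_sym (far_sub R_X X_far) R_near) _.
  apply/subset_leq_card/Eset_mono/subsetP => z; exact: ball_mono (arith_packing a_pos b_pos).
have fx0 : f x = 0.
  apply: (dominated_zero cardR); apply: leq_trans sum_le.
  by rewrite -sum_nat_const; apply: leq_sum => y /setIdP[yX _]; apply: xmin.
have /card_gt1P[y1 [y2 [y1R y2R y12]]] : 1 < #|R|.
  by apply: leq_trans cardR; rewrite ltnS muln_gt0 b_pos.
have [y yR yx] : exists2 y, y \in R & y != x.
  by case: (eqVneq y1 x) => [y1x | ]; [exists y2; rewrite // -y1x eq_sym | exists y1].
have [z exz] := iball_neighbour (setIdP yR).2 yx.
by have := Eset_ball_gt0 a_pos exz; rewrite -/(f x) fx0.
Qed.

End MaximalFarSet.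
End Setting.

Theorem lemmaB8 (T : finType) (e : rel T)
  (e_sym : symmetric e) (e_irr : irreflexive e)
  (a b : nat) (a_pos : 0 < a) (b_pos : 0 < b) (VD : {set T})
  (hVD : forall v, v \in VD ->
     #|Eset e (ball e (100 * a * b) v)| <= 2 * b * #|Eset e (ball e a v)|) :
  forall S : {set T}, is_component e (W0 e VD a) S -> invH e VD a b S.
Proof.
move=> _ [x0 x0W ->]; set S := [set y | _].
pose far_in_VD (Y : {set T}) := (Y \subset S :&: VD) && far e a Y.
have [X /andP[X_sub X_far] NX_X] : exists2 X, far_in_VD X & NX e VD a S = #|X|.
  have far0 : far_in_VD set0 by rewrite /far_in_VD sub0set (far_sub (sub0set _) (far_set1 e a x0)).
  exists [arg max_(Y > set0 | far_in_VD Y) #|Y|]; first by case: arg_maxnP.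
  exact: bigmax_eq_arg far0.
have X_max (Y : {set T}) : Y \subset S :&: VD -> far e a Y -> #|Y| <= #|X|.
  by rewrite -NX_X => Y_sub Y_far; apply: leq_bigmax_cond; rewrite /far_in_VD Y_sub.
split.
- exact: ball_component.
- have [D -> D_le] := diam_le (component_iconnected e_sym x0W)
    (fun u v => component_dist e_sym x0W X_sub X_far X_max a_pos).
  by rewrite NX_X; exact: (arith_int a_pos (X_card_gt0 e_sym x0W X_sub X_far X_max) D_le).
- by rewrite NX_X; exact: (X_card_le e_sym x0W X_sub X_far X_max a_pos b_pos hVD).
Qed.
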